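(* Let $a_{ij}\ge 0$ for $1\le i\ne j\le N$ with $a_{ij}=a_{ji}$, and let $\mathbf S(t)$ be the stochastic consensus model: independent Poisson processes $N^{ij}$ of rate $a_{ij}$, and $\mathrm dS_i=\sum_{j\ne i}(S_j-S_i)\,\mathrm dN^{ij}$. Let $V(\mathbf S)=\frac1N\sum_{i=1}^N|S_i-\bar S|^2=\frac{1}{2N^2}\sum_{i,j}|S_i-S_j|^2$ with $\bar S=\frac1N\sum_i S_i$. Then $$\frac{d}{dt}\mathbb E[V(\mathbf S(t))]=-\frac{1}{N^2}\mathbb E\Big[\sum_{i,j}a_{ij}|S_j(t)-S_i(t)|^2\Big].$$
   Context: Equivalently, the process has generator $\frac{d}{dt}\mathbb E[\varphi(\mathbf S)]=\sum_{i\ne j}a_{ij}\mathbb E[\varphi(\Phi_{ij}(\mathbf S))-\varphi(\mathbf S)]$, where $\Phi_{ij}$ replaces the $i$th coordinate by the $j$th. *)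

From HB Require Import structures.
From mathcomp Require Import all_boot all_order all_algebra.
From mathcomp Require Import all_classical all_reals all_analysis.
Set Implicit Arguments. Unset Strict Implicit. Unset Printing Implicit Defensive.
Import Order.TTheory GRing.Theory Num.Theory.
Local Open Scope ring_scope.

Definition config (R : realType) (N d : nat) := 'I_N -> 'rV[R]_d.

Definition sqnorm (R : realType) (d : nat) (v : 'rV[R]_d) : R :=
  \sum_(k < d) (v 0 k) ^+ 2.

Definition Phi (R : realType) (N d : nat) (i j : 'I_N) (S : config R N d)
  : config R N d := fun k => if k == i then S j else S k.

Definition mean (R : realType) (N d : nat) (S : config R N d) : 'rV[R]_d :=
  N%:R^-1 *: \sum_(i < N) S i.

Definition Var (R : realType) (N d : nat) (S : config R N d) : R :=
  N%:R^-1 * \sum_(i < N) sqnorm (S i - mean S).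

(* E t phi = E[phi(S(t))]: the law of the process at each time t,
   seen as a linear, normalized expectation functional on observables. *)
Definition is_expectation (R : realType) (N d : nat)
  (E : R -> (config R N d -> R) -> R) : Prop :=
  forall t : R,
    (forall phi psi, E t (fun S => phi S + psi S) = E t phi + E t psi) /\
    (forall (c : R) phi, E t (fun S => c * phi S) = c * E t phi) /\
    E t (fun _ => 1) = 1.

(* The stochastic consensus model with rates a_ij, described by its
   generator (Kolmogorov equation):
   d/dt E[phi(S)] = sum_{i<>j} a_ij E[phi(Phi_ij S) - phi S]. *)
Definition consensus_generator (R : realType) (N d : nat)
  (a : 'I_N -> 'I_N -> R) (E : R -> (config R N d -> R) -> R) : Prop :=
  forall (phi : config R N d -> R) (t : R),
    is_derive t (1 : R) (fun u => E u phi)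
      (\sum_(i < N) \sum_(j < N | j != i)
          a i j * E t (fun S => phi (Phi i j S) - phi S)).

From HB Require Import structures.
From mathcomp Require Import all_boot all_order all_algebra.
From mathcomp Require Import all_classical all_reals all_analysis.
From mathcomp Require Import ring.
Import Order.TTheory GRing.Theory Num.Theory.
Set Implicit Arguments. Unset Strict Implicit. Unset Printing Implicit Defensive.
Local Open Scope ring_scope.

(* The variance splits into a sum over coordinates of scalar variances, and
   for a scalar configuration x, V = mean(x^2) - mean(x)^2.  Replacing x_i by
   x_j therefore changes V by h(x_j) - h(x_i) - (x_j - x_i)^2 / N^2, where
   h(y) = (y^2 - 2 mean(x) y) / N.  Summed against the symmetric rates a_ij,
   the antisymmetric part h(x_j) - h(x_i) cancels, which leaves the drift
   -(1/N^2) sum a_ij |S_j - S_i|^2 pointwise; linearity of the expectation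
   and the generator equation turn this into the claimed derivative. *)

Section ScalarVariance.
Variables (R : realType) (N : nat).
Implicit Types (x h : 'I_N -> R) (a : 'I_N -> 'I_N -> R).

Definition smean x : R := N%:R^-1 * \sum_(l < N) x l.

Definition svar x : R := N%:R^-1 * \sum_(l < N) (x l - smean x) ^+ 2.

Lemma sumr_update (F : R -> R) x (i : 'I_N) (y : R) :
  \sum_(l < N) F (if l == i then y else x l) =
  \sum_(l < N) F (x l) + F y - F (x i).
Proof.
rewrite (bigD1 i) //= eqxx [in RHS](bigD1 i) //=.
rewrite (eq_bigr (fun l => F (x l))); last by move=> l /negPf ->.
ring.
Qed.

Lemma svarE x : (0 < N)%N ->
  svar x = N%:R^-1 * \sum_(l < N) x l ^+ 2 - smean x ^+ 2.
Proof.
move=> N_gt0; have N_neq0 : N%:R != 0 :> R by rewrite pnatr_eq0 -lt0n.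
rewrite /svar; have sum_const_sq : \sum_(l < N) smean x ^+ 2 = N%:R * smean x ^+ 2.
  by rewrite sumr_const card_ord mulr_natl.
have -> : \sum_(l < N) (x l - smean x) ^+ 2 =
    \sum_(l < N) x l ^+ 2 - 2 * smean x * \sum_(l < N) x l
    + N%:R * smean x ^+ 2.
  rewrite -sum_const_sq mulr_sumr -sumrB -big_split /=.
  by apply: eq_bigr => l _; ring.
by rewrite /smean; field.
Qed.

Lemma svar_update x (i j : 'I_N) :
  svar (fun l => if l == i then x j else x l) - svar x =
    N%:R^-1 * (x j ^+ 2 - 2 * smean x * x j)
  - N%:R^-1 * (x i ^+ 2 - 2 * smean x * x i)
  - (N%:R ^+ 2)^-1 * (x j - x i) ^+ 2.
Proof.
have N_gt0 : (0 < N)%N by apply: leq_ltn_trans (ltn_ord i).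
have N_neq0 : N%:R != 0 :> R by rewrite pnatr_eq0 -lt0n.
rewrite !svarE // /smean (sumr_update (fun y => y ^+ 2)) (sumr_update id).
by field.
Qed.

Lemma sumr_sym_antisym a h :
  (forall i j : 'I_N, i != j -> a i j = a j i) ->
  \sum_(i < N) \sum_(j < N | j != i) a i j * (h j - h i) = 0.
Proof.
move=> a_sym.
under eq_bigr => i _ do under eq_bigr => j _ do rewrite mulrBr.
under eq_bigr => i _ do rewrite sumrB.
rewrite sumrB (exchange_big_dep xpredT) //=; apply/eqP; rewrite subr_eq0; apply/eqP.
apply: eq_bigr => j _; apply: eq_big => [i|i ij]; first by rewrite eq_sym.
by rewrite a_sym // eq_sym.
Qed.

Lemma svar_drift a x :
  (forall i j : 'I_N, i != j -> a i j = a j i) ->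
  \sum_(i < N) \sum_(j < N | j != i)
      a i j * (svar (fun l => if l == i then x j else x l) - svar x) =
  - (N%:R ^+ 2)^-1 *
      \sum_(i < N) \sum_(j < N | j != i) a i j * (x j - x i) ^+ 2.
Proof.
move=> a_sym; pose h l := N%:R^-1 * (x l ^+ 2 - 2 * smean x * x l).
under eq_bigr => i _ do under eq_bigr => j _ do
  rewrite svar_update -/(h j) -/(h i) mulrBr.
under eq_bigr => i _ do rewrite sumrB.
rewrite sumrB sumr_sym_antisym // sub0r mulNr mulr_sumr; congr (- _).
by apply: eq_bigr => i _; rewrite mulr_sumr; apply: eq_bigr => j _; ring.
Qed.

End ScalarVariance.

Section VectorVariance.
Variables (R : realType) (N d : nat).
Implicit Types (S : config R N d) (a : 'I_N -> 'I_N -> R).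

Definition coord S (k : 'I_d) : 'I_N -> R := fun l => S l 0 k.

Lemma Var_coord S : Var S = \sum_(k < d) svar (coord S k).
Proof.
rewrite /Var /sqnorm exchange_big /= mulr_sumr; apply: eq_bigr => k _.
by congr (_ * _); apply: eq_bigr => i _; rewrite /mean !mxE summxE.
Qed.

Lemma sqnormB_coord S (i j : 'I_N) :
  sqnorm (S j - S i) = \sum_(k < d) (coord S k j - coord S k i) ^+ 2.
Proof. by apply: eq_bigr => k _; rewrite !mxE. Qed.

Lemma coord_Phi S (i j : 'I_N) k :
  coord (Phi i j S) k = fun l => if l == i then coord S k j else coord S k l.
Proof. by apply/funext => l; rewrite /coord /Phi; case: ifP. Qed.

Lemma Var_drift a S :
  (forall i j : 'I_N, i != j -> a i j = a j i) ->
  \sum_(i < N) \sum_(j < N | j != i) a i j * (Var (Phi i j S) - Var S) =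
  - (N%:R ^+ 2)^-1 *
      \sum_(i < N) \sum_(j < N | j != i) a i j * sqnorm (S j - S i).
Proof.
move=> a_sym.
under eq_bigr => i _ do under eq_bigr => j _ do
  rewrite !Var_coord -sumrB mulr_sumr.
under [in RHS]eq_bigr => i _ do under eq_bigr => j _ do
  rewrite sqnormB_coord mulr_sumr.
under eq_bigr => i _ do rewrite exchange_big /=.
under [in RHS]eq_bigr => i _ do rewrite exchange_big /=.
rewrite exchange_big [in RHS]exchange_big /= mulr_sumr.
apply: eq_bigr => k _; rewrite -svar_drift //.
by apply: eq_bigr => i _; apply: eq_bigr => j _; rewrite coord_Phi.
Qed.

End VectorVariance.

Lemma expectation_sum (R : realType) (N d : nat)
  (E : R -> (config R N d -> R) -> R) (t : R) (I : Type) (r : seq I)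
  (P : pred I) (F : I -> config R N d -> R) :
  is_expectation E ->
  E t (fun S => \sum_(i <- r | P i) F i S) = \sum_(i <- r | P i) E t (F i).
Proof.
move=> hE; have [E_add [E_scale _]] := hE t.
elim: r => [|x r IH].
  rewrite big_nil -[RHS](mul0r (E t (fun=> 1))) -E_scale.
  by congr (E t _); apply/funext => S; rewrite big_nil mul0r.
rewrite big_cons -IH; case Px: (P x).
  by rewrite -E_add; congr (E t _); apply/funext => S; rewrite big_cons Px.
by congr (E t _); apply/funext => S; rewrite big_cons Px.
Qed.

Theorem mainTheorem11 (R : realType) (N d : nat) (a : 'I_N -> 'I_N -> R)
  (E : R -> (config R N d -> R) -> R)
  (a_ge0 : forall i j : 'I_N, i != j -> 0 <= a i j)
  (a_sym : forall i j : 'I_N, i != j -> a i j = a j i)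
  (hE : is_expectation E)
  (hgen : consensus_generator a E) (t : R) :
  is_derive t (1 : R) (fun u => E u (@Var R N d))
    (- (N%:R ^+ 2)^-1 *
       E t (fun S => \sum_(i < N) \sum_(j < N | j != i)
                       a i j * sqnorm (S j - S i))).
Proof.
have [_ [E_scale _]] := hE t.
suff -> : - (N%:R ^+ 2)^-1 *
    E t (fun S => \sum_(i < N) \sum_(j < N | j != i) a i j * sqnorm (S j - S i))
  = \sum_(i < N) \sum_(j < N | j != i)
      a i j * E t (fun S => Var (Phi i j S) - Var S) by exact: hgen.
under [RHS]eq_bigr => i _ do under eq_bigr => j _ do rewrite -E_scale.
rewrite -E_scale; under [RHS]eq_bigr => i _ do rewrite -expectation_sum //.
rewrite -expectation_sum //; congr (E t _); apply/funext => S.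
by rewrite Var_drift.
Qed.
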